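(* Let $\mathcal{F}$ be a saturated fusion system over a finite $p$-group $S$, and let $Q\trianglelefteq S$ be a normal subgroup that is not weakly closed in $\mathcal{F}$. Then there are $P\in Q^{\mathcal{F}}\smallsetminus\{Q\}$, $R\in\mathcal{E}_{\mathcal{F}}\cup\{S\}$, and $\alpha\in\mathrm{Aut}_{\mathcal{F}}(R)$ such that $R\ge Q$, $P=\alpha(Q)$, $R=N_S(P)$, $P$ is fully normalized in $N_{\mathcal{F}}(Q)$, and $|R|\ge|N_S(U)|$ for all $U\in Q^{\mathcal{F}}\smallsetminus\{Q\}$.
   Context: A fusion system $\mathcal{F}$ over a finite $p$-group $S$ is a category whose objects are the subgroups of $S$, with $\mathrm{Hom}_S(P,Q)\subseteq\mathrm{Hom}_{\mathcal{F}}(P,Q)\subseteq\mathrm{Inj}(P,Q)$, every morphism an isomorphism in $\mathcal{F}$ followed by an inclusion; saturation is given by Puig's Sylow and extension axioms. $Q^{\mathcal{F}}$ is the set of subgroups $\mathcal{F}$-conjugate (isomorphic in $\mathcal{F}$) to $Q$; $Q$ is weakly closed if $Q^{\mathcal{F}}=\{Q\}$. $\mathcal{E}_{\mathcal{F}}$ is the set of $\mathcal{F}$-essential subgroups: $\mathcal{F}$-centric, fully normalized subgroups $P$ such that $\mathrm{Aut}_{\mathcal{F}}(P)/\mathrm{Inn}(P)$ has a strongly $p$-embedded subgroup. $N_{\mathcal{F}}(Q)$ is the fusion system over $N_S(Q)$ whose morphisms $P\to R$ are restrictions of $\varphi\in\mathrm{Hom}_{\mathcal{F}}(PQ,RQ)$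 with $\varphi(P)\le R$, $\varphi(Q)=Q$; a subgroup $X$ is fully normalized in it if $|N_{N_S(Q)}(X)|\ge|N_{N_S(Q)}(Y)|$ for all $Y$ conjugate to $X$ in $N_{\mathcal{F}}(Q)$. *)

From mathcomp Require Import all_boot all_fingroup.
From mathcomp Require Import pgroup.
Set Implicit Arguments. Unset Strict Implicit. Unset Printing Implicit Defensive.
Local Open Scope group_scope.

Section Fusion.
Variable gT : finGroupType.

(* A morphism of the fusion system with domain P is represented by a finite
   function gT -> gT, normalized to be the identity outside P.  A fusion
   system over S is given by the boolean predicate [hom P phi] meaning
   "phi ∈ Hom_F(P, S)"; then Hom_F(P,Q) = {phi | hom P phi, phi(P) <= Q}. *)
Definition restr (P : {set gT}) (f : gT -> gT) : {ffun gT -> gT} :=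
  [ffun x => if x \in P then f x else x].

Definition finv_on (P : {set gT}) (phi : {ffun gT -> gT}) (y : gT) : gT :=
  odflt y [pick x in P | phi x == y].

Definition fusion_system (S : {set gT})
    (hom : {set gT} -> {ffun gT -> gT} -> bool) : Prop :=
  [/\
      (forall P phi, hom P phi ->
        [/\ group_set P /\ P \subset S, ({in P &, {morph phi : x y / x * y}}),
            ({in P &, injective phi}), phi @: P \subset S
          & forall x, x \notin P -> phi x = x]),
      (forall (P : {group gT}) g, P \subset S -> g \in S ->
        hom P (restr P (fun x => x ^ g))),
      (forall P phi psi, hom P phi -> hom (phi @: P) psi ->
        hom P (restr P (fun x => psi (phi x)))),
      (forall P phi (P' : {group gT}), hom P phi -> P' \subset P ->
        hom P' (restr P' phi))
    &
      (forall P phi, hom P phi ->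
        hom (phi @: P) (restr (phi @: P) (finv_on P phi)))].

Variable S : {set gT}.
Variable hom : {set gT} -> {ffun gT -> gT} -> bool.

Definition fconj (P Q : {set gT}) : bool := [exists phi, hom P phi && (phi @: P == Q)].

Definition fully_normalized (P : {set gT}) : bool :=
  [forall Q : {set gT}, fconj P Q ==> (#|'N_S(Q)| <= #|'N_S(P)|)].

Definition fully_centralized (P : {set gT}) : bool :=
  [forall Q : {set gT}, fconj P Q ==> (#|'C_S(Q)| <= #|'C_S(P)|)].

Definition centric (P : {set gT}) : bool :=
  [forall Q : {set gT}, fconj P Q ==> ('C_S(Q) \subset Q)].

(* Aut_F(P), Aut_S(P), Inn(P) as groups of permutations of gT
   (identity outside P) *)
Definition AutF (P : {set gT}) : {set {perm gT}} :=
  [set s : {perm gT} | hom P [ffun x => s x] && (s @: P == P)].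

Definition conj_on (P : {set gT}) (g : gT) (s : {perm gT}) : bool :=
  [forall x, s x == (if x \in P then x ^ g else x)].

Definition AutS (P : {set gT}) : {set {perm gT}} :=
  [set s : {perm gT} | [exists g in 'N_S(P), conj_on P g s]].

Definition InnP (P : {set gT}) : {set {perm gT}} :=
  [set s : {perm gT} | [exists g in P, conj_on P g s]].

Definition Nphi (P : {set gT}) (phi : {ffun gT -> gT}) : {set gT} :=
  [set g in 'N_S(P) | [exists h in 'N_S(phi @: P),
                        [forall y in P, phi (y ^ g) == (phi y) ^ h]]].

Definition saturated (p : nat) : Prop :=
  (forall P : {set gT}, P \subset S -> group_set P -> fully_normalized P ->
     fully_centralized P /\ p.-Sylow(AutF P) (AutS P)) /\
  (forall P phi, hom P phi -> fully_centralized (phi @: P) ->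
     exists psi, hom (Nphi P phi) psi && [forall x in P, psi x == phi x]).

End Fusion.

Definition strongly_p_embedded (T : finGroupType) (p : nat) (G H : {set T}) : bool :=
  [&& H \proper G, p %| #|H| &
      [forall x in G :\: H, ~~ (p %| #|H :&: H :^ x|)]].

Definition has_strongly_p_embedded (T : finGroupType) (p : nat) (G : {set T}) : Prop :=
  exists H : {group T}, strongly_p_embedded p G H.

Section Essential.
Variables (gT : finGroupType) (S : {set gT}) (hom : {set gT} -> {ffun gT -> gT} -> bool).

Definition essential (p : nat) (P : {set gT}) : Prop :=
  [/\ P \subset S, group_set P, centric S hom P, fully_normalized S hom P
    & has_strongly_p_embedded p (AutF hom P / InnP P)].

(* X (<= N_S(Q)) is fully normalized in N_F(Q): compare |N_{N_S(Q)}(X)| with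
   |N_{N_S(Q)}(Y)| for all Y = phi(X), phi ∈ Hom_F(XQ, N_S(Q)Q) with phi(Q) = Q *)
Definition fully_normalized_in_NF (Q X : {set gT}) : Prop :=
  X \subset 'N_S(Q) /\
  forall phi, hom (X * Q) phi -> phi @: Q = Q ->
    #|'N_('N_S(Q))(phi @: X)| <= #|'N_('N_S(Q))(X)|.

End Essential.

(* Pick U in Q^F - {Q} with |N_S(U)| maximal.  As Q <| S is fully normalized, some
   F-morphism defined on N_S(U) maps U onto Q, and its inverse is an F-morphism moving Q
   whose domain contains Q and has order |N_S(U)|.  Any such morphism psi : R -> S is then
   improved, by descending induction on |R|, into an F-automorphism alpha moving Q of some
   R' in E_F u {S} with |R'| >= |R|: conjugating R and psi(R) to a fully normalized R1 (by
   F-morphisms defined on their normalisers) either enlarges the domain or yields an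
   automorphism of R1 moving Q; if some such automorphism of R1 <> S extends beyond R1
   (extension axiom) the domain grows again, and otherwise R1 is centric and the stabiliser
   of Q in Aut_F(R1) is strongly p-embedded modulo Inn(R1).  Finally R' normalises
   P := alpha(Q), and the maximality of |N_S(U)| forces R' = N_S(P). *)

From mathcomp Require Import all_boot all_fingroup all_solvable.
Set Implicit Arguments. Unset Strict Implicit. Unset Printing Implicit Defensive.
Local Open Scope group_scope.

Section StronglyEmbeddedQuotient.
Variables (gT : finGroupType) (p : nat) (D T I K : {group gT}).
Hypotheses (nID : I <| D) (sIT : I \subset T) (sylT : p.-Sylow(D) T).
Hypotheses (sTK : T \subset K) (sKD : K \subset D).
Hypothesis meet_conj_mem :
  forall y, y \in D -> ~~ (T :&: T :^ y \subset I) -> y \in K.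

Lemma pgroup_meet_conj_mem y (W : {group gT}) : y \in D -> p.-group W ->
  W \subset K :&: K :^ y -> ~~ (W \subset I) -> y \in K.
Proof.
move=> Dy pW /subsetIP[sWK sWKy] not_sWI.
have sylTK := pHall_subl sTK sKD sylT.
have [k Kk sWkT] := Sylow_Jsub sylTK sWK pW.
have [k' Kk' sWyk'T] : exists2 k', k' \in K & W :^ (y^-1 * k') \subset T.
  have sWyK : W :^ y^-1 \subset K by rewrite sub_conjgV.
  have pWy : p.-group (W :^ y^-1) by rewrite pgroupJ.
  have [k' Kk' sWyT] := Sylow_Jsub sylTK (Q := (W :^ y^-1)%G) sWyK pWy.
  by exists k'; rewrite // conjsgM.
(* W^k lies in T and in T^w, so T :&: T :^ w is not contained in I. *)
pose w := k'^-1 * y * k.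
have Kw : w \in K.
  apply: meet_conj_mem; first by rewrite !groupM ?groupV ?(subsetP sKD k) ?(subsetP sKD k').
  apply: contra not_sWI => sTTwI.
  have nIk : k \in 'N(I) := subsetP (subset_trans sKD (normal_norm nID)) k Kk.
  rewrite -(conjSg _ _ k) (normP nIk); apply: subset_trans sTTwI.
  rewrite subsetI sWkT /w -sub_conjgV -conjsgM.
  by rewrite !invMg invgK !mulgA mulgV mul1g.
have -> : y = k' * w * k^-1 by rewrite /w !mulgA mulgV mul1g mulgK.
exact: groupM (groupM Kk' Kw) (groupVr Kk).
Qed.

Lemma strongly_p_embedded_quotient : prime p -> K :!=: D -> ~~ (T \subset I) ->
  strongly_p_embedded p (D / I) (K / I).
Proof.
move=> p_pr neKD not_sTI.
have nIK : K \subset 'N(I) := subset_trans sKD (normal_norm nID).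
have pT := pHall_pgroup sylT.
apply/and3P; split.
- rewrite properEneq quotientS // andbT.
  apply: contraNneq neKD => /quotient_inj -> //.
  exact: normalS (subset_trans sIT sTK) sKD nID.
- have nIT : I <| T := normalS sIT (subset_trans sTK sKD) nID.
  have ntTI : T / I != 1 by rewrite quotient_neq1 // properE sIT.
  have [_ p_dv _] := pgroup_pdiv (quotient_pgroup I pT) ntTI.
  exact: dvdn_trans p_dv (cardSg (quotientS I sTK)).
apply/forall_inP => _ /setDP[/morphimP[y Ny Dy ->] notKIy].
have notKy : y \notin K by apply: contra notKIy => Ky; apply: mem_quotient.
rewrite -quotientJ // -quotientIG; last by rewrite -(normP Ny) conjSg (subset_trans sIT).
have sIM : I \subset K :&: K :^ y by rewrite subsetI -{2}(normP Ny) conjSg !(subset_trans sIT).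
rewrite card_quotient ?(subset_trans (subsetIl _ _) nIK) //.
apply: contraNN notKy => p_dv_index.
have [W sylW sIW] := Sylow_superset sIM (pgroupS sIT pT).
apply: pgroup_meet_conj_mem Dy (pHall_pgroup sylW) (pHall_sub sylW) _.
apply: contraL p_dv_index => sWI.
have eWI : W :=: I by apply/eqP; rewrite eqEsubset sWI.
by case/and3P: sylW => _ _; rewrite eWI p'natE.
Qed.

End StronglyEmbeddedQuotient.

Section FinFun.
Variable gT : finGroupType.
Implicit Types (P A : {set gT}) (f g : gT -> gT).

Lemma restr_in P f x : x \in P -> restr P f x = f x.
Proof. by move=> Px; rewrite ffunE Px. Qed.

Lemma restr_out P f x : x \notin P -> restr P f x = x.
Proof. by move=> Px; rewrite ffunE (negbTE Px). Qed.

Lemma imset_restr P A f : A \subset P -> restr P f @: A = f @: A.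
Proof. by move=> sAP; apply: eq_in_imset => x /(subsetP sAP)/restr_in. Qed.

Lemma imset_cancel_in P A f g : A \subset P -> {in P, cancel f g} ->
  g @: (f @: A) = A.
Proof.
move=> sAP fK; rewrite -imset_comp (eq_in_imset (g := id)) ?imset_id //.
by move=> x /(subsetP sAP)/fK.
Qed.

Definition toperm (f : {ffun gT -> gT}) : {perm gT} :=
  if injectiveP f is ReflectT f_inj then perm f_inj else 1.

Lemma topermE (f : {ffun gT -> gT}) : injective f -> toperm f =1 f.
Proof. by rewrite /toperm; case: injectiveP => // f_inj _ x; rewrite permE. Qed.

End FinFun.

Section FusionSystem.
Variables (gT : finGroupType) (S : {group gT}).
Variable hom : {set gT} -> {ffun gT -> gT} -> bool.
Hypothesis FS : fusion_system S hom.
Implicit Types (P R V : {set gT}) (phi psi : {ffun gT -> gT}).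

Lemma homP P phi : hom P phi ->
  [/\ group_set P /\ P \subset S, {in P &, {morph phi : x y / x * y}},
      {in P &, injective phi}, phi @: P \subset S
    & forall x, x \notin P -> phi x = x].
Proof. by case: FS => H _ _ _ _; apply: H. Qed.

Lemma hom_conj (P : {group gT}) g : P \subset S -> g \in S ->
  hom P (restr P (conjg^~ g)).
Proof. by case: FS => _ H _ _ _; apply: H. Qed.

Lemma hom_compose P phi psi : hom P phi -> hom (phi @: P) psi ->
  hom P (restr P (fun x => psi (phi x))).
Proof. by case: FS => _ _ H _ _; apply: H. Qed.

Lemma hom_restr P phi P' : hom P phi -> group_set P' -> P' \subset P ->
  hom P' (restr P' phi).
Proof. by case: FS => _ _ _ H _ hphi gP'; apply: (H _ _ (Group gP')). Qed.

Lemma hom_group_set P phi : hom P phi -> group_set P.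
Proof. by case/homP => [[]]. Qed.

Lemma hom_sub P phi : hom P phi -> P \subset S.
Proof. by case/homP => [[]]. Qed.

Lemma hom_out P phi x : hom P phi -> x \notin P -> phi x = x.
Proof. by case/homP => _ _ _ _; apply. Qed.

Lemma hom_inj P phi : hom P phi -> {in P &, injective phi}.
Proof. by case/homP. Qed.

Lemma hom_imset_sub P phi : hom P phi -> phi @: P \subset S.
Proof. by case/homP. Qed.

Lemma card_hom_imset P phi (A : {set gT}) : hom P phi -> A \subset P ->
  #|phi @: A| = #|A|.
Proof. by move=> hphi /subsetP sAP; apply/card_in_imset/(sub_in2 sAP (hom_inj hphi)). Qed.

Lemma hom_morphism P phi : hom P phi ->
  exists (G : {group gT}) (f : {morphism G >-> gT}), [/\ P = G, f =1 phi & 'injm f].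
Proof.
case/homP => [[gP _] phiM phi_inj _ _].
by exists (Group gP), (Morphism phiM); split=> //; apply/injmP.
Qed.

Lemma hom_imset_group_set P phi : hom P phi -> group_set (phi @: P).
Proof.
move=> /hom_morphism[G [f [eP fE _]]]; rewrite eP.
by rewrite -(eq_imset G fE) -morphimEdom groupP.
Qed.

Lemma hom_imset_inj P phi (A B : {set gT}) : hom P phi -> A \subset P -> B \subset P ->
  phi @: A = phi @: B -> A = B.
Proof.
case/hom_morphism => G [f [-> fE injf]] sAG sBG.
rewrite -(eq_imset A fE) -(eq_imset B fE) -!morphimEsub //.
exact: injm_morphim_inj.
Qed.

Lemma hom_comp P R phi psi (chi : gT -> gT) :
  hom P phi -> hom R psi -> phi @: P \subset R ->
  {in P, forall x, chi x = psi (phi x)} -> hom P (restr P chi).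
Proof.
move=> hphi hpsi sPR chiE.
have := hom_compose hphi (hom_restr hpsi (hom_imset_group_set hphi) sPR).
congr hom; apply/ffunP => x; rewrite /restr !ffunE.
by case: ifP => // Px; rewrite imset_f // chiE.
Qed.

Lemma hom_inv P phi : hom P phi -> exists phi',
  [/\ hom (phi @: P) phi', {in P, cancel phi phi'} & phi' @: (phi @: P) = P].
Proof.
move=> hphi; exists (restr (phi @: P) (finv_on P phi)).
have phiK : {in P, cancel phi (restr (phi @: P) (finv_on P phi))}.
  move=> x Px; rewrite restr_in ?imset_f // /finv_on.
  case: pickP => [x' /andP[Px' /eqP/(hom_inj hphi Px' Px)] //|/(_ x)].
  by rewrite Px eqxx.
split=> //; last exact: imset_cancel_in phiK.
by case: FS => _ _ _ _; apply.
Qed.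

Lemma fconjP P R : reflect (exists phi, hom P phi /\ phi @: P = R) (fconj hom P R).
Proof.
apply: (iffP existsP) => [[phi /andP[hphi /eqP]]|[phi [hphi <-]]]; first by exists phi.
by exists phi; rewrite hphi eqxx.
Qed.

Lemma fconj_refl P : group_set P -> P \subset S -> fconj hom P P.
Proof.
move=> gP sPS; apply/fconjP; exists (restr P (conjg^~ 1)); split.
  exact: (hom_conj (P := Group gP)).
by rewrite imset_restr // (eq_imset _ (@conjg1 _)) imset_id.
Qed.

Lemma fconj_sym P R : fconj hom P R -> fconj hom R P.
Proof.
case/fconjP => phi [hphi <-]; have [phi' [hphi' _ eP]] := hom_inv hphi.
by apply/fconjP; exists phi'.
Qed.

Lemma fconj_trans P R V : fconj hom P R -> fconj hom R V -> fconj hom P V.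
Proof.
case/fconjP => phi [hphi <-] /fconjP[psi [hpsi <-]].
apply/fconjP; exists (restr P (fun x => psi (phi x))); split; first exact: hom_compose.
by rewrite imset_restr // imset_comp.
Qed.

Lemma fconj_group_set P R : fconj hom P R ->
  [/\ group_set P, P \subset S, group_set R & R \subset S].
Proof.
case/fconjP => phi [hphi <-].
by rewrite (hom_group_set hphi) (hom_sub hphi) (hom_imset_group_set hphi) (hom_imset_sub hphi).
Qed.

Lemma exists_fully_normalized_conj P : group_set P -> P \subset S ->
  exists2 R, fconj hom P R & fully_normalized S hom R.
Proof.
move=> gP /(fconj_refl gP) PP.
have [R PR maxR] := arg_maxnP (fun U => #|'N_S(U)|) PP.
exists R => //; apply/forall_inP => U RU.
exact/maxR/(fconj_trans PR).
Qed.

Lemma hom_aut_injective P phi : hom P phi -> phi @: P = P -> injective phi.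
Proof.
move=> hphi phiP x y.
have phi_in z : z \in P -> phi z \in P by move=> Pz; rewrite -phiP imset_f.
case Px: (x \in P); case Py: (y \in P).
- exact: (hom_inj hphi).
- by rewrite (hom_out hphi (negbT Py)) => exy; move: (phi_in _ Px); rewrite exy Py.
- by rewrite (hom_out hphi (negbT Px)) => exy; move: (phi_in _ Py); rewrite -exy Px.
- by rewrite !(hom_out hphi) ?Px ?Py.
Qed.

Lemma AutFP P (s : {perm gT}) : reflect (hom P [ffun x => s x] /\ s @: P = P) (s \in AutF hom P).
Proof. by rewrite inE; apply: (iffP andP) => -[? /eqP]. Qed.

Lemma toperm_AutF P phi : hom P phi -> phi @: P = P -> toperm phi \in AutF hom P.
Proof.
move=> hphi phiP; have tE := topermE (hom_aut_injective hphi phiP).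
apply/AutFP; split; last by rewrite (eq_imset _ tE).
by congr hom: hphi; apply/ffunP => x; rewrite ffunE tE.
Qed.

Lemma AutF_mem P (s : {perm gT}) x : s \in AutF hom P -> (s x \in P) = (x \in P).
Proof. by case/AutFP => _ sP; rewrite -{1}sP mem_imset //; apply: perm_inj. Qed.

Lemma AutFJ P (s : {perm gT}) : s \in AutF hom P ->
  {in P &, forall x y, s (x ^ y) = s x ^ s y}.
Proof.
case/AutFP => /hom_morphism[G [f [-> fE _]]] _ x y Gx Gy.
by have := morphJ f Gx Gy; rewrite !fE !ffunE.
Qed.

Lemma AutF_group_set (P : {group gT}) : P \subset S -> group_set (AutF hom P).
Proof.
move=> sPS; apply/group_setP; split.
  apply/AutFP; rewrite (eq_imset _ (@perm1 gT)) imset_id; split=> //.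
  by congr hom: (hom_conj sPS (group1 S)); apply/ffunP => x; rewrite !ffunE perm1 conjg1 if_same.
move=> s t /AutFP[hs sP] /AutFP[ht tP]; apply/AutFP.
rewrite (eq_imset _ (permM s t)) imset_comp sP tP; split=> //.
have sP' : [ffun x => s x] @: P = P by rewrite -{2}sP; apply: eq_imset => x; rewrite ffunE.
have := hom_compose hs (etrans (congr1 (hom^~ _) sP') ht).
congr hom; apply/ffunP => x; rewrite /restr !ffunE permM; case: ifP => // /negbT Px.
by have := hom_out ht Px; have := hom_out hs Px; rewrite !ffunE => -> ->.
Qed.

Lemma conj_onP P g (s : {perm gT}) :
  reflect (forall x, s x = if x \in P then x ^ g else x) (conj_on P g s).
Proof. by apply: (iffP forallP) => sE x; apply/eqP. Qed.

Lemma conj_on1 P : conj_on P 1 1.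
Proof. by apply/conj_onP => x; rewrite perm1 conjg1 if_same. Qed.

Lemma conj_onM (P : {group gT}) g h (s t : {perm gT}) : g \in 'N(P) ->
  conj_on P g s -> conj_on P h t -> conj_on P (g * h) (s * t).
Proof.
move=> Ng /conj_onP sE /conj_onP tE; apply/conj_onP => x.
by rewrite permM sE; case: ifP => Px; rewrite tE ?memJ_norm ?Px ?conjgM.
Qed.

Lemma conj_on_ffun P g (s : {perm gT}) : conj_on P g s ->
  [ffun x => s x] = restr P (conjg^~ g).
Proof. by move/conj_onP => sE; apply/ffunP => x; rewrite !ffunE sE. Qed.

Lemma conj_on_imset (P : {group gT}) g (s : {perm gT}) : g \in 'N(P) ->
  conj_on P g s -> s @: P = P.
Proof.
move=> /normP-Pg /conj_onP sE; rewrite -{2}Pg.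
by apply: eq_in_imset => x Px; rewrite sE Px.
Qed.

Lemma toperm_conj_on (P : {group gT}) g : P \subset S -> g \in 'N_S(P) ->
  conj_on P g (toperm (restr P (conjg^~ g))).
Proof.
move=> sPS /setIP[Sg Ng]; have hc := hom_conj sPS Sg.
have cP : restr P (conjg^~ g) @: P = P by rewrite imset_restr //; apply: normP.
by apply/conj_onP => x; rewrite (topermE (hom_aut_injective hc cP)) ffunE.
Qed.

Lemma AutS_group_set (P : {group gT}) : group_set (AutS S P).
Proof.
apply/group_setP; split; first by rewrite inE; apply/exists_inP; exists 1; rewrite ?conj_on1.
move=> s t; rewrite !inE => /exists_inP[g NSg sg] /exists_inP[h NSh th].
apply/exists_inP; exists (g * h); first exact: groupM.
by apply: conj_onM => //; case/setIP: NSg.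
Qed.

Lemma InnP_group_set (P : {group gT}) : group_set (InnP P).
Proof.
apply/group_setP; split; first by rewrite inE; apply/exists_inP; exists 1; rewrite ?conj_on1.
move=> s t; rewrite !inE => /exists_inP[g Pg sg] /exists_inP[h Ph th].
apply/exists_inP; exists (g * h); first exact: groupM.
by apply: conj_onM => //; apply: (subsetP (normG P)).
Qed.

Lemma AutS_sub (P : {group gT}) : P \subset S -> AutS S P \subset AutF hom P.
Proof.
move=> sPS; apply/subsetP => s; rewrite inE => /exists_inP[g /setIP[Sg Ng] sg].
by apply/AutFP; rewrite (conj_on_ffun sg) (conj_on_imset Ng sg) hom_conj.
Qed.

Lemma InnP_sub (P : {group gT}) : P \subset S -> InnP P \subset AutS S P.
Proof.
move=> sPS; apply/subsetP => s; rewrite !inE => /exists_inP[g Pg sg].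
by apply/exists_inP; exists g; rewrite // inE (subsetP sPS) ?(subsetP (normG P)).
Qed.

Lemma InnP_normal (P : {group gT}) : P \subset S -> InnP P <| AutF hom P.
Proof.
move=> sPS; rewrite /normal (subset_trans (InnP_sub sPS) (AutS_sub sPS)) /=.
apply/subsetP => c Ac; rewrite inE; apply/subsetP => _ /imsetP[s Is ->].
move: Is; rewrite inE => /exists_inP[g Pg /conj_onP sE].
rewrite inE; apply/exists_inP; exists (c g); first by rewrite AutF_mem.
apply/conj_onP => x; rewrite -{1}(permKV c x) permJ sE -(AutF_mem _ Ac) permKV.
case: ifP => Px; last exact: permKV.
have Px' : c^-1 x \in P by rewrite -(AutF_mem _ Ac) permKV.
by have := AutFJ Ac Px' Pg; rewrite permKV.
Qed.

Lemma Nphi_sub P phi : Nphi S P phi \subset 'N_S(P).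
Proof. by apply/subsetP => g; rewrite inE => /andP[]. Qed.

Lemma sub_Nphi P phi : hom P phi -> P \subset Nphi S P phi.
Proof.
move=> hphi; have [G [f [eP fE _]]] := hom_morphism hphi; subst P.
have GS := subsetP (hom_sub hphi).
have phiG : phi @: G = f @* G by rewrite morphimEdom; apply: eq_imset.
apply/subsetP => g Gg; have NSg : g \in 'N_S(G) by rewrite inE GS ?(subsetP (normG G)).
rewrite inE NSg /=.
apply/exists_inP; exists (phi g).
  have fg : f g \in f @* G by apply: mem_morphim.
  rewrite -fE phiG inE (subsetP (normG _)) // andbT.
  by rewrite -phiG in fg; apply: (subsetP (hom_imset_sub hphi)).
by apply/forall_inP => y Gy; rewrite -!fE morphJ.
Qed.

Lemma cent_sub_Nphi P phi : 'C_S(P) \subset Nphi S P phi.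
Proof.
apply/subsetP => g /setIP[Sg cPg].
have NSg : g \in 'N_S(P) by rewrite inE Sg (subsetP (cent_sub P)).
rewrite inE NSg /=.
apply/exists_inP; exists 1; first exact: group1.
by apply/forall_inP => y Py; rewrite conjg1 /conjg -(centP cPg y Py) mulKg.
Qed.

Definition AutF_stab P (A : {set gT}) := [set s in AutF hom P | s @: A == A].

Lemma AutF_stab_group_set (P : {group gT}) A : P \subset S -> group_set (AutF_stab P A).
Proof.
move=> sPS; apply/group_setP; split.
  by rewrite inE (group1 (Group (AutF_group_set sPS))) (eq_imset _ (@perm1 gT)) imset_id /=.
move=> s t /setIdP[As /eqP sA] /setIdP[At /eqP tA]; apply/setIdP; split.
  exact: (groupM (G := Group (AutF_group_set sPS))).
by rewrite (eq_imset _ (permM s t)) imset_comp sA tA.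
Qed.

Section Transport.
Variables (V R : {group gT}) (sigma sigma' : {ffun gT -> gT}).
Hypotheses (hsigma : hom V sigma) (sigmaV : sigma @: V = R).
Hypotheses (hsigma' : hom R sigma') (sigmaK : {in V, cancel sigma sigma'}).

Let sigma'_in x : x \in R -> sigma' x \in V.
Proof. by rewrite -sigmaV => /imsetP[y Vy ->]; rewrite sigmaK. Qed.

Let sigma'R : sigma' @: R = V.
Proof. by rewrite -sigmaV; apply: imset_cancel_in sigmaK. Qed.

Definition transport_conj g : {ffun gT -> gT} := restr R (fun x => sigma (sigma' x ^ g)).

Lemma transport_conj_aut g : g \in 'N_S(V) ->
  hom R (transport_conj g) /\ transport_conj g @: R = R.
Proof.
case/setIP => Sg Ng; have hc := hom_conj (hom_sub hsigma) Sg.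
have sigma'gR : (fun x => sigma' x ^ g) @: R = V.
  by rewrite -(normP Ng) -sigma'R /conjugate -imset_comp.
have hc' : hom R (restr R (fun x => restr V (conjg^~ g) (sigma' x))).
  by apply: hom_comp hsigma' hc _ _; rewrite ?sigma'R.
split; last by rewrite imset_restr // imset_comp sigma'gR.
apply: hom_comp hc' hsigma _ _.
  rewrite imset_restr // (eq_in_imset (g := fun x => sigma' x ^ g)) ?sigma'gR //.
  by move=> x /sigma'_in/restr_in.
by move=> x Rx; rewrite !restr_in ?sigma'_in.
Qed.

Definition transport g := toperm (transport_conj g).

Lemma transportE g x : g \in 'N_S(V) -> transport g x = transport_conj g x.
Proof.
by case/transport_conj_aut => h hR; rewrite /transport (topermE (hom_aut_injective h hR)).
Qed.

Lemma transport_AutF g : g \in 'N_S(V) -> transport g \in AutF hom R.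
Proof. by case/transport_conj_aut; apply: toperm_AutF. Qed.

Lemma transportM : {in 'N_S(V) &, {morph transport : g h / g * h}}.
Proof.
move=> g h NSg NSh; apply/permP => x; rewrite permM !transportE ?groupM //.
have [Rx | notRx] := boolP (x \in R); last by rewrite !restr_out.
have Vxg : sigma' x ^ g \in V by rewrite memJ_norm ?sigma'_in //; case/setIP: NSg.
by rewrite !restr_in ?sigmaK ?conjgM // -sigmaV imset_f.
Qed.

Canonical transport_morphism := Morphism transportM.

End Transport.

Lemma fully_normalized_normal (P : {group gT}) : P <| S -> fully_normalized S hom P.
Proof.
move=> nPS; apply/forall_inP => U _.
by rewrite (setIidPl (normal_norm nPS)) subset_leq_card ?subsetIl.
Qed.

Lemma centric_of_fully_centralized (P : {group gT}) : P \subset S ->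
  fully_centralized S hom P -> 'C_S(P) \subset P -> centric S hom P.
Proof.
move=> sPS fcP sCP; apply/forall_inP => V /fconjP[phi [hphi phiP]].
have [G [f [eP fE injf]]] := hom_morphism hphi.
have fP : f @* P = V by rewrite eP morphimEdom -phiP eP; apply: eq_imset.
have CPZ : 'C_S(P) = 'Z(P).
  by apply/eqP; rewrite eqEsubset /center (setSI _ sPS) andbT subsetI sCP subsetIr.
have ZVZP : #|'Z(V)| = #|'Z(P)|.
  by rewrite -fP -injm_center ?card_injm ?eP ?subsetIl.
have sZC : 'Z(V) \subset 'C_S(V) by apply: setSI; rewrite -phiP hom_imset_sub.
have -> : 'C_S(V) = 'Z(V).
  apply/esym/eqP; rewrite eqEcard sZC ZVZP -CPZ.
  by have /forall_inP := fcP; apply; apply/fconjP; exists phi.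
exact: subsetIl.
Qed.

Lemma AutS_not_sub_InnP (P : {group gT}) : P \subset S -> P \proper 'N_S(P) ->
  'C_S(P) \subset P -> ~~ (AutS S P \subset InnP P).
Proof.
move=> sPS /properP[_ [g NSg notPg]] sCP; apply: contra notPg => sAI.
have cg := toperm_conj_on sPS NSg.
have AScg : toperm (restr P (conjg^~ g)) \in AutS S P.
  by rewrite inE; apply/exists_inP; exists g.
have := subsetP sAI _ AScg; rewrite inE => /exists_inP[h Ph ch].
have Sg : g \in S by case/setIP: NSg.
suff /(subsetP sCP) : g * h^-1 \in 'C_S(P) by rewrite groupMr ?groupV.
apply/setIP; split; first exact: groupM Sg (groupVr (subsetP sPS h Ph)).
apply/centP => x Px.
have := (conj_onP _ _ _ cg) x; rewrite (conj_onP _ _ _ ch) Px => xgh.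
by apply/commute_sym/commgP/conjg_fixP; rewrite conjgM -xgh conjgK.
Qed.

Section Saturated.
Variable p : nat.
Hypotheses (Sat : saturated S hom p) (pS : p.-group S).

Lemma saturated_Sylow (P : {group gT}) : P \subset S -> fully_normalized S hom P ->
  fully_centralized S hom P /\ p.-Sylow(AutF hom P) (AutS S P).
Proof. by case: Sat => H _ sPS fnP; apply: H => //; apply: groupP. Qed.

Lemma saturated_extension P phi : hom P phi -> fully_centralized S hom (phi @: P) ->
  exists2 psi, hom (Nphi S P phi) psi & {in P, psi =1 phi}.
Proof.
case: Sat => _ H hphi fc; have [psi /andP[hpsi /forall_inP psiE]] := H P phi hphi fc.
by exists psi => // x /psiE/eqP.
Qed.

Lemma card_lt_norm P : group_set P -> P \proper S -> #|P| < #|'N_S(P)|.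
Proof. by move=> gP /(nilpotent_proper_norm (H := Group gP) (pgroup_nil pS))/proper_card. Qed.

Definition AutF_group (P : {group gT}) (sPS : P \subset S) := Group (AutF_group_set sPS).
Definition AutS_group (P : {group gT}) := Group (AutS_group_set P).
Definition InnP_group (P : {group gT}) := Group (InnP_group_set P).

Lemma extend_to_normaliser V R : fully_normalized S hom R -> fconj hom V R ->
  exists chi, hom 'N_S(V) chi /\ chi @: V = R.
Proof.
move=> fnR VR; have [gV _ gR sR] := fconj_group_set VR.
pose VG := Group gV; pose RG := Group gR; have sRS : RG \subset S := sR.
have [sigma [hsigma sigmaV]] : exists sigma, hom VG sigma /\ sigma @: VG = RG by apply/fconjP.
have [sigma' [hsigma' sigmaK _]] := hom_inv hsigma.
rewrite sigmaV in hsigma'.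
have [fcR sylR] := saturated_Sylow (P := RG) sRS fnR.
(* Sylow's theorem in Aut_F(R) conjugates the image of N_S(V) into Aut_S(R) by some a;
   then N_S(V) <= N_chi0 for chi0 = a \o sigma, and the extension axiom applies. *)
pose tr := transport_morphism hsigma sigmaV hsigma' sigmaK.
have sTA : tr @* 'N_S(VG) \subset AutF_group sRS.
  by apply/subsetP => _ /morphimP[g _ NSg ->]; apply: (transport_AutF hsigma sigmaV hsigma' sigmaK).
have pT : p.-group (tr @* 'N_S(VG)) by apply/morphim_pgroup/(pgroupS (subsetIl _ _)).
have [a Aa sTaS] := Sylow_Jsub (G := AutF_group sRS) (P := AutS_group RG) sylR sTA pT.
have /AutFP[ha aR] : a \in AutF hom RG := Aa.
pose chi0 := restr VG (fun x => a (sigma x)).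
have hchi0 : hom VG chi0.
  by apply: (hom_comp hsigma ha); rewrite ?sigmaV ?aR // => x _; rewrite ffunE.
have chi0V : chi0 @: VG = RG by rewrite imset_restr // imset_comp sigmaV aR.
suff sNphi : 'N_S(VG) \subset Nphi S VG chi0.
  have [|psi hpsi psiE] := saturated_extension hchi0; first by rewrite chi0V.
  exists psi; split; last by apply: etrans chi0V; apply: eq_in_imset.
  by congr hom: hpsi; apply/eqP; rewrite eqEsubset sNphi Nphi_sub.
apply/subsetP => g NSg; rewrite inE NSg /=.
have : tr g ^ a \in AutS_group RG by rewrite (subsetP sTaS) // memJ_conjg mem_morphim.
rewrite inE => /exists_inP[h NSh /conj_onP hE].
apply/exists_inP; exists h; first by rewrite chi0V.
apply/forall_inP => y Vy; have Vyg : y ^ g \in VG by rewrite memJ_norm //; case/setIP: NSg.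
have sigma_in : sigma y \in RG by rewrite -sigmaV imset_f.
have := hE (a (sigma y)); rewrite permJ /= (transportE hsigma sigmaV hsigma' sigmaK) //.
by rewrite !restr_in ?sigmaK // (AutF_mem _ Aa) sigma_in => ->.
Qed.

Section NormalSubgroup.
Variable Q : {group gT}.
Hypotheses (p_pr : prime p) (nQS : Q <| S).

Definition moves_Q R psi := [/\ hom R psi, Q \subset R & psi @: Q != Q].

Definition has_larger_mover R := exists R' psi, moves_Q R' psi /\ #|R| < #|R'|.

Lemma inverse_moves_Q N chi (Q' : {set gT}) : hom N chi -> Q' \subset N ->
  chi @: Q' = Q -> Q' != Q -> exists chi', moves_Q (chi @: N) chi' /\ chi' @: Q = Q'.
Proof.
move=> hchi sQ'N chiQ' neQ'Q; have [chi' [hchi' chiK _]] := hom_inv hchi.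
have chi'Q : chi' @: Q = Q' by rewrite -chiQ'; apply: imset_cancel_in chiK.
exists chi'; split; rewrite ?chi'Q //; split; rewrite ?chi'Q //.
by rewrite -chiQ' imsetS.
Qed.

Lemma moves_Q_conj_aut R1 R N chi' psi chs :
  hom R1 chi' -> chi' @: R1 = R -> chi' @: Q = Q -> Q \subset R1 -> hom R psi ->
  hom N chs -> psi @: R \subset N -> chs @: (psi @: R) = R1 -> chs @: (psi @: Q) != Q ->
  exists2 b, moves_Q R1 b & b @: R1 = R1.
Proof.
move=> hchi' chi'R1 chi'Q sQR1 hpsi hchs sPN chsR chsQ.
exists (restr R1 (fun x => chs (psi (chi' x)))).
have hpsichi' : hom R1 (restr R1 (fun x => psi (chi' x))).
  by apply: (hom_comp hchi' hpsi); rewrite ?chi'R1.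
- split=> //; last by rewrite imset_restr // !imset_comp chi'Q.
  apply: (hom_comp hpsichi' hchs); last by move=> x R1x; rewrite restr_in.
  by rewrite imset_restr // imset_comp chi'R1.
- by rewrite imset_restr // !imset_comp chi'R1 chsR.
Qed.

Lemma moves_Q_to_fully_normalized R psi : moves_Q R psi ->
  has_larger_mover R \/ exists R1 b,
    [/\ fully_normalized S hom R1, #|R1| = #|R|, moves_Q R1 b & b @: R1 = R1].
Proof.
case=> hpsi sQR psiQ; have gR := hom_group_set hpsi; have sRS := hom_sub hpsi.
have [eRS | neRS] := eqVneq R S.
  right; exists R, psi; split=> //; first by rewrite eRS fully_normalized_normal ?normal_refl.
  by apply/eqP; rewrite eqEcard (card_hom_imset hpsi (subxx _)) {2}eRS (hom_imset_sub hpsi) leqnn.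
have ltRN : #|R| < #|'N_S(R)|.
  by rewrite card_lt_norm ?(hom_group_set hpsi) // properEneq neRS.
have sRN : R \subset 'N_S(R) by rewrite subsetI sRS (normG (Group gR)).
have [R1 RR1 fnR1] := exists_fully_normalized_conj gR sRS.
have [chi [hchi chiR]] := extend_to_normaliser fnR1 RR1.
have [chiQ | chiQ] := eqVneq (chi @: Q) Q; last first.
  by left; exists 'N_S(R), chi; rewrite ltRN; do !split; rewrite ?(subset_trans sQR sRN).
have psiRR1 : fconj hom (psi @: R) R1.
  by apply: fconj_trans RR1; apply/fconj_sym/fconjP; exists psi.
(* Unless chi or chs already moves Q, chs \o psi \o chi^-1 is an automorphism of R1
   moving Q. *)
have [chs [hchs chsR]] := extend_to_normaliser fnR1 psiRR1.
have sPQ : psi @: Q \subset psi @: R by apply: imsetS.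
have sPN : psi @: R \subset 'N_S(psi @: R).
  by rewrite subsetI hom_imset_sub // (normG (Group (hom_imset_group_set hpsi))).
have [chsQ | chsQ] := eqVneq (chs @: (psi @: Q)) Q.
  have [chs' [mchs' _]] := inverse_moves_Q hchs (subset_trans sPQ sPN) chsQ psiQ.
  left; exists (chs @: 'N_S(psi @: R)), chs'; split=> //.
  rewrite (card_hom_imset hchs (subxx _)) -(card_hom_imset hpsi (subxx R)).
  rewrite card_lt_norm ?(hom_imset_group_set hpsi) // properEcard hom_imset_sub //.
  by rewrite (card_hom_imset hpsi (subxx _)) proper_card // properEneq neRS.
have [chi' [hchi' chiK _]] := hom_inv hchi.
have sR1 : R1 \subset chi @: 'N_S(R) by rewrite -chiR imsetS.
have chi'R1 : chi' @: R1 = R by rewrite -chiR; apply: imset_cancel_in chiK.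
have chi'Q : chi' @: Q = Q.
  by rewrite -{1}chiQ; apply: imset_cancel_in chiK; rewrite (subset_trans sQR).
have [_ _ gR1 _] := fconj_group_set RR1.
have sQR1 : Q \subset R1 by rewrite -chiR -chiQ imsetS.
have [b mb bR1] := moves_Q_conj_aut (hom_restr hchi' gR1 sR1)
  (etrans (imset_restr _ (subxx _)) chi'R1) (etrans (imset_restr _ sQR1) chi'Q)
  sQR1 hpsi hchs sPN chsR chsQ.
by right; exists R1, b; rewrite -{2}chiR (card_hom_imset hchi sRN).
Qed.

Section EssentialCriterion.
Variables (R : {group gT}) (b : {ffun gT -> gT}).
Hypotheses (sRS : R \subset S) (fnR : fully_normalized S hom R) (neRS : R != S :> {set gT}).
Hypotheses (hb : hom R b) (sQR : Q \subset R) (bQ : b @: Q != Q) (bR : b @: R = R).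
Hypothesis Nphi_sub : forall g, moves_Q R g -> g @: R = R -> Nphi S R g \subset R.

Let sCR : 'C_S(R) \subset R.
Proof. exact: subset_trans (cent_sub_Nphi _ b) (Nphi_sub (And3 hb sQR bQ) bR). Qed.

Lemma AutS_meet_conj_sub_stab y : y \in AutF hom R ->
  ~~ (AutS S R :&: AutS S R :^ y \subset InnP R) -> y \in AutF_stab R Q.
Proof.
(* If c = c_g lies in AutS(R) :^ y then g lies in N_gam for gam = y^-1, which is
   contained in R unless y stabilises Q; so c is inner. *)
move=> Ay; case/subsetPn => c /setIP[ASc]; rewrite mem_conjg => ASyc notIc.
rewrite inE Ay /=; apply: contraR notIc => yQ.
have Ayi : y^-1 \in AutF_group sRS by rewrite groupV.
have /AutFP[hyi yiR] : y^-1 \in AutF hom R := Ayi.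
pose gam := [ffun x => y^-1 x].
have gamE : gam =1 y^-1 by move=> x; rewrite ffunE.
have gamR : gam @: R = R by rewrite (eq_imset _ gamE).
have gamQ : gam @: Q != Q.
  apply: contra yQ => /eqP gQ; apply/eqP.
  by rewrite -{1}gQ (eq_imset _ gamE) -imset_comp (eq_imset _ (permKV y)) imset_id.
have sNR := Nphi_sub (And3 hyi sQR gamQ) gamR.
move: ASc ASyc; rewrite !inE => /exists_inP[g NSg cg] /exists_inP[h NSh ch].
apply/exists_inP; exists g => //; apply: (subsetP sNR).
rewrite inE NSg /=; apply/exists_inP; exists h; first by rewrite gamR.
apply/forall_inP => w Rw; rewrite !ffunE.
have := (conj_onP _ _ _ ch) (y^-1 w).
by rewrite permJ (conj_onP _ _ _ cg) Rw (AutF_mem _ Ayi) Rw => ->.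
Qed.

Lemma essential_of_Nphi_sub : essential S hom p R.
Proof.
have [fcR sylR] := saturated_Sylow sRS fnR.
split=> //; [exact: groupP | exact: centric_of_fully_centralized | ].
pose K := Group (AutF_stab_group_set Q sRS).
have sKA : K \subset AutF_group sRS by apply/subsetP => s /setIdP[].
have sASK : AutS_group R \subset K.
  apply/subsetP => s ASs; rewrite inE (subsetP (AutS_sub sRS)) //=.
  move: ASs; rewrite inE => /exists_inP[g /setIP[Sg _] /conj_onP sE].
  rewrite -{2}(normP (subsetP (normal_norm nQS) g Sg)) /conjugate.
  by apply/eqP/eq_in_imset => x Qx; rewrite sE (subsetP sQR).
exists (K / InnP_group R)%G.
apply: (@strongly_p_embedded_quotient _ p (AutF_group sRS) (AutS_group R) (InnP_group R) K
  (InnP_normal sRS) (InnP_sub sRS) sylR sASK sKA AutS_meet_conj_sub_stab p_pr).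
- apply/eqP => eKA.
  have /setIdP[_] : toperm b \in K by rewrite eKA (toperm_AutF hb bR).
  by rewrite (eq_imset _ (topermE (hom_aut_injective hb bR))) (negbTE bQ).
apply: AutS_not_sub_InnP sRS _ sCR.
by rewrite nilpotent_proper_norm ?(pgroup_nil pS) // properEneq neRS.
Qed.

End EssentialCriterion.

Lemma fully_normalized_mover_cases (R : {group gT}) b :
  fully_normalized S hom R -> moves_Q R b -> b @: R = R ->
  has_larger_mover R \/ R = S :> {set gT} \/ essential S hom p R.
Proof.
move=> fnR [hb sQR bQ] bR; have sRS := hom_sub hb.
have [eRS | neRS] := eqVneq (R : {set gT}) S; first by right; left.
have [|noext] := boolP [exists g, [&& hom R g, g @: R == R, g @: Q != Q
                                    & ~~ (Nphi S R g \subset R)]].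
  case/existsP => g /and4P[hg /eqP gR gQ notNR]; left.
  have [|psi hpsi psiE] := saturated_extension hg.
    by rewrite gR; case: (saturated_Sylow sRS fnR).
  exists (Nphi S R g), psi; split; last by rewrite proper_card // properE sub_Nphi.
  split=> //; first exact: subset_trans sQR (sub_Nphi hg).
  by rewrite (eq_in_imset (g := g)) // => x /(subsetP sQR)/psiE.
right; right; apply: essential_of_Nphi_sub sRS fnR neRS hb sQR bQ bR _ => g [hg _ gQ] gR.
by apply: contraNT noext => notNR; apply/existsP; exists g; rewrite hg gR eqxx gQ.
Qed.

Lemma exists_essential_moves_Q R psi : moves_Q R psi -> exists R' alpha,
  [/\ R' = S \/ essential S hom p R', moves_Q R' alpha, alpha @: R' = R' & #|R| <= #|R'|].
Proof.
have [n] := ubnP (#|S| - #|R|); elim: n => // n IHn in R psi *; rewrite ltnS => leRn mpsi.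
have larger R0 : #|R0| = #|R| -> has_larger_mover R0 -> exists R' alpha,
    [/\ R' = S \/ essential S hom p R', moves_Q R' alpha, alpha @: R' = R' & #|R| <= #|R'|].
  move=> eR0 [R' [psi' [mpsi' ltR']]].
  have leR'S : #|R'| <= #|S| by case: mpsi' => /hom_sub/subset_leq_card.
  have [|R'' [a [ess ma aR'' leR'']]] := IHn R' psi' _ mpsi'.
    by apply: leq_trans leRn; rewrite -eR0 ltn_sub2l // (leq_trans ltR').
  by exists R'', a; split=> //; rewrite -eR0 (leq_trans (ltnW ltR')).
have [|[R1 [b [fnR1 eR1 mb bR1]]]] := moves_Q_to_fully_normalized mpsi; first exact: larger.
have [hb _ _] := mb; pose R1G := Group (hom_group_set hb).
have [|[eR1S | essR1]] := fully_normalized_mover_cases (R := R1G) fnR1 mb bR1; first exact: larger.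
  by exists R1, b; rewrite eR1; split=> //; left.
by exists R1, b; rewrite eR1; split=> //; right.
Qed.

Lemma not_weakly_closed_moves_Q : (exists P, fconj hom Q P /\ P <> Q) ->
  exists R psi, moves_Q R psi /\
    forall U, fconj hom Q U -> U <> Q -> #|'N_S(U)| <= #|R|.
Proof.
case=> P0 [QP0 /eqP neP0Q].
have [|U /andP[QU neUQ] maxU] := @arg_maxnP _ P0 (fun U => fconj hom Q U && (U != Q))
  (fun U => #|'N_S(U)|); first by rewrite QP0.
have [chi [hchi chiU]] := extend_to_normaliser (fully_normalized_normal nQS) (fconj_sym QU).
have [_ _ gU sUS] := fconj_group_set QU.
have sUN : U \subset 'N_S(U) by rewrite subsetI sUS (normG (Group gU)).
have [chi' [mchi' _]] := inverse_moves_Q hchi sUN chiU neUQ.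
exists (chi @: 'N_S(U)), chi'; split=> // V QV /eqP neVQ.
by rewrite (card_hom_imset hchi (subxx _)); apply: (maxU V); rewrite QV.
Qed.

Lemma aut_sub_norm_imset (R : {set gT}) alpha : hom R alpha -> alpha @: R = R ->
  Q \subset R -> R \subset 'N_S(alpha @: Q).
Proof.
move=> ha aR sQR; rewrite subsetI (hom_sub ha) /=.
have [G [f [eR fE _]]] := hom_morphism ha; have sRS := subsetP (hom_sub ha).
rewrite eR in aR sQR sRS *; apply/subsetP => x; rewrite -aR => /imsetP[g Gg ->].
rewrite inE -(eq_imset Q fE) -morphimEsub // -fE -morphimJ //.
by rewrite (normP (subsetP (normal_norm nQS) g _)) ?sRS.
Qed.

Lemma fully_normalized_in_NF_of_max P : fconj hom Q P -> P != Q ->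
  (forall U, fconj hom Q U -> U <> Q -> #|'N_S(U)| <= #|'N_S(P)|) ->
  fully_normalized_in_NF S hom Q P.
Proof.
move=> QP nePQ maxP; have NSQ : 'N_S(Q) = S := setIidPl (normal_norm nQS).
have [_ _ gP sPS] := fconj_group_set QP; rewrite /fully_normalized_in_NF NSQ.
split=> // phi hphi phiQ; pose PG := Group gP.
have sPPQ : PG \subset PG * Q by rewrite mulG_subl.
have sQPQ : Q \subset PG * Q by rewrite mulG_subr.
apply: maxP => [|phiPQ].
  apply: fconj_trans QP _; apply/fconjP; exists (restr P phi); split.
    exact: hom_restr hphi gP sPPQ.
  by rewrite imset_restr.
by move/eqP: nePQ; apply; apply: hom_imset_inj hphi sPPQ sQPQ _; rewrite phiQ.
Qed.

End NormalSubgroup.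
End Saturated.
End FusionSystem.

Theorem lemma2p5 (gT : finGroupType) (p : nat) (S Q : {group gT})
    (hom : {set gT} -> {ffun gT -> gT} -> bool) :
  prime p -> p.-group S ->
  fusion_system S hom -> saturated S hom p ->
  Q <| S ->
  (exists P : {set gT}, fconj hom Q P /\ P <> Q) ->
  exists (P R : {set gT}) (alpha : {ffun gT -> gT}),
    [/\ fconj hom Q P /\ P <> Q,
        R = S \/ essential S hom p R,
        hom R alpha /\ alpha @: R = R,
        [/\ Q \subset R, P = alpha @: Q, R = 'N_S(P) & fully_normalized_in_NF S hom Q P]
      & forall U : {set gT}, fconj hom Q U -> U <> Q -> #|'N_S(U)| <= #|R|].
Proof.
move=> p_pr pS FS Sat nQS /(not_weakly_closed_moves_Q FS Sat pS nQS) [R0 [psi [mpsi maxR0]]].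
have [R [alpha [essR [ha sQR aQ] aR leR0R]]] := exists_essential_moves_Q FS Sat pS p_pr nQS mpsi.
have QP : fconj hom Q (alpha @: Q).
  apply/fconjP; exists (restr Q alpha); rewrite imset_restr //.
  by split=> //; exact: (hom_restr FS ha (groupP Q) sQR).
have sRN := aut_sub_norm_imset FS nQS ha aR sQR.
have maxR U : fconj hom Q U -> U <> Q -> #|'N_S(U)| <= #|R|.
  by move=> QU neUQ; apply: leq_trans leR0R; apply: maxR0.
have eR : R = 'N_S(alpha @: Q).
  by apply/eqP; rewrite eqEcard sRN maxR //; apply/eqP.
exists (alpha @: Q), R, alpha; split=> //; first by split=> //; apply/eqP.
split=> //; apply: (fully_normalized_in_NF_of_max FS nQS QP aQ).
by rewrite -eR.
Qed.
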